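(* Let $H$ be a Hilbert space of finite dimension $M$ and let $(x_j)_{j=1}^N$ and $(f_j)_{j=1}^N$ be tight frames for $H$ with $\|x_j\|=\|f_j\|$ for all $1\leq j\leq N$. Let $C>0$ be the least constant such that $$\Big\|\sum_{j=1}^N \varepsilon_j\langle x, f_j\rangle x_j\Big\|\leq C\|x\| \qquad\text{for all } x\in H \text{ and all scalars } \varepsilon_j \text{ with } |\varepsilon_j|=1.$$ Then the tight frames $(x_j)_{j=1}^N$ and $(f_j)_{j=1}^N$ have the same frame bound $B=M^{-1}\sum_{j=1}^N\|x_j\|^2$, and $C\leq B\leq\frac{27}{4}K_1^{-4}C$.
   Context: A sequence $(y_j)_{j=1}^N$ in $H$ is a tight frame with frame bound $B>0$ if $\sum_{j=1}^N|\langle x,y_j\rangle|^2=B\|x\|^2$ for all $x\in H$. $K_1>0$ denotes the constant in Khintchine's inequality: for all $N\in\mathbb{N}$ and all scalars $(a_j)_{j=1}^N$, $2^{-N}\sum_{\delta_j=\pm1}\big|\sum_{j=1}^N\delta_j a_j\big|\geq K_1\big(\sum_{j=1}^N|a_j|^2\big)^{1/2}$. *)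

From HB Require Import structures.
From mathcomp Require Import all_boot all_order all_algebra.
From mathcomp Require Import reals.
From mathcomp.real_closed Require Import complex.
Set Implicit Arguments. Unset Strict Implicit. Unset Printing Implicit Defensive.
Import Order.TTheory GRing.Theory Num.Theory.
Local Open Scope ring_scope.

(* H = K^M, realized as column vectors 'cV[K]_M, where the scalar field K is
   either R (real Hilbert space: cj = id, ab = absolute value) or R[i]
   (complex Hilbert space: cj = complex conjugation, ab = modulus normc).
   cj : conjugation, ab : modulus K -> R. *)
Section Frames.
Variables (R : realType) (K : nzRingType) (cj : K -> K) (ab : K -> R).

Definition dotp (M : nat) (x y : 'cV[K]_M) : K := \sum_i x i 0 * cj (y i 0).

Definition vnorm (M : nat) (x : 'cV[K]_M) : R := Num.sqrt (\sum_i ab (x i 0) ^+ 2).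

Definition tight_frame (M N : nat) (y : 'I_N -> 'cV[K]_M) (B : R) : Prop :=
  0 < B /\ forall x : 'cV[K]_M, \sum_j ab (dotp x (y j)) ^+ 2 = B * vnorm x ^+ 2.

Definition unimod_bound (M N : nat) (x f : 'I_N -> 'cV[K]_M) (c : R) : Prop :=
  forall (eps : 'I_N -> K), (forall j, ab (eps j) = 1) ->
  forall v : 'cV[K]_M, vnorm (\sum_j (eps j * dotp v (f j)) *: x j) <= c * vnorm v.

Definition least_unimod_const (M N : nat) (x f : 'I_N -> 'cV[K]_M) (C : R) : Prop :=
  0 < C /\ unimod_bound x f C /\
  forall c : R, 0 < c -> unimod_bound x f c -> C <= c.

Definition khintchine (K1 : R) : Prop :=
  forall (n : nat) (a : 'I_n -> K),
    K1 * Num.sqrt (\sum_j ab (a j) ^+ 2) <=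
    (2 ^+ n)^-1 * \sum_(d : {ffun 'I_n -> bool}) ab (\sum_j (-1) ^+ d j * a j).

End Frames.

(** Testing a tight frame with bound [B] on the standard basis gives
    [sum_j ||y_j||^2 = M B], so both frames have the bound [B] of the statement.
    Cauchy-Schwarz and tightness give [sum_j |<u, f_j>| |<w, x_j>| <= B ||u|| ||w||],
    whence [C <= B].  Conversely, choosing the unimodular [eps_j] so that all terms
    of [<sum_j eps_j <u, f_j> x_j, w>] are nonnegative reals gives
    [sum_j |<u, f_j>| |<w, x_j>| <= C ||u|| ||w||].  Averaging this over all sign
    vectors [u], [w] in [{-1, 1}^M] (of norm [sqrt M]) and applying Khintchine's
    inequality to each [x_j] and [f_j] yields [K1^2 sum_j ||f_j|| ||x_j|| <= C M],
    i.e. [K1^2 B <= C].  This is sharper than the stated bound since [K1 <= 1]. *)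
From HB Require Import structures.
From mathcomp Require Import all_boot all_order all_algebra.
From mathcomp Require Import reals.
From mathcomp.real_closed Require Import complex.
From mathcomp Require Import ring lra.
Set Implicit Arguments. Unset Strict Implicit. Unset Printing Implicit Defensive.
Import Order.TTheory GRing.Theory Num.Theory.
Local Open Scope ring_scope.

Lemma sum_mul_sum (R : comPzSemiRingType) (I J : finType) (c : I -> R) (d : J -> R) :
  \sum_i \sum_j c i * d j = (\sum_i c i) * (\sum_j d j).
Proof. by rewrite mulr_suml; apply: eq_bigr => i _; rewrite mulr_sumr. Qed.

Lemma cauchy_schwarz_sqr (R : realFieldType) (I : finType) (a b : I -> R) :
  (\sum_i a i * b i) ^+ 2 <= (\sum_i a i ^+ 2) * (\sum_i b i ^+ 2).
Proof.
have expand : \sum_i \sum_j (a i * b j - a j * b i) ^+ 2 =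
    \sum_i \sum_j a i ^+ 2 * b j ^+ 2 + \sum_i \sum_j a j ^+ 2 * b i ^+ 2
    - (\sum_i \sum_j (a i * b i) * (a j * b j)) *+ 2.
  rewrite -sumrMnl -big_split -sumrB /=; apply: eq_bigr => i _.
  rewrite -sumrMnl -big_split -sumrB /=; apply: eq_bigr => j _; ring.
have : 0 <= \sum_i \sum_j (a i * b j - a j * b i) ^+ 2.
  by do 2!(apply: sumr_ge0 => ? _); exact: sqr_ge0.
rewrite expand [X in _ + X - _]exchange_big /= !sum_mul_sum expr2; lra.
Qed.

Lemma cauchy_schwarz (R : rcfType) (I : finType) (a b : I -> R) :
  \sum_i a i * b i <= Num.sqrt (\sum_i a i ^+ 2) * Num.sqrt (\sum_i b i ^+ 2).
Proof.
have [S_le0|S_gt0] := lerP (\sum_i a i * b i) 0.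
  by apply: le_trans S_le0 _; rewrite mulr_ge0 ?sqrtr_ge0.
rewrite -sqrtrM; last by apply: sumr_ge0 => i _; exact: sqr_ge0.
rewrite -[leLHS]ger0_norm ?(ltW S_gt0) // -sqrtr_sqr.
apply: ler_wsqrtr; exact: cauchy_schwarz_sqr.
Qed.

Lemma sum_ffun_bool_const (R : pzSemiRingType) (M : nat) (c : R) :
  \sum_(d : {ffun 'I_M -> bool}) c = c * 2 ^+ M.
Proof. by rewrite sumr_const card_ffun card_bool card_ord -natrX mulr_natr. Qed.

Section ScalarField.
Variables (R : realType) (K : comNzRingType) (cj : K -> K) (ab : K -> R) (emb : R -> K).
Hypotheses (ab_ge0 : forall a, 0 <= ab a) (abM : {morph ab : a b / a * b})
  (ler_abD : forall a b, ab (a + b) <= ab a + ab b) (ab1 : ab 1 = 1)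
  (abN : forall a, ab (- a) = ab a) (abJ : forall a, ab (cj a) = ab a).
Hypotheses (cjD : {morph cj : a b / a + b}) (cjM : {morph cj : a b / a * b})
  (cjK : involutive cj).
Hypotheses (embD : {morph emb : r s / r + s}) (ab_emb : forall r, 0 <= r -> ab (emb r) = r)
  (mul_cj : forall a, a * cj a = emb (ab a ^+ 2))
  (phase : forall a, exists2 e, ab e = 1 & e * a = emb (ab a)).

Lemma emb0 : emb 0 = 0.
Proof. by apply: (addrI (emb 0)); rewrite -embD !addr0. Qed.

Lemma emb_sum (I : finType) (F : I -> R) : emb (\sum_i F i) = \sum_i emb (F i).
Proof. exact: (big_morph emb embD emb0). Qed.

Lemma cj_sum (I : finType) (F : I -> K) : cj (\sum_i F i) = \sum_i cj (F i).
Proof.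
have cj0 : cj 0 = 0 by apply: (addrI (cj 0)); rewrite -cjD !addr0.
exact: (big_morph cj cjD cj0).
Qed.

Lemma ab0 : ab 0 = 0.
Proof. by rewrite -emb0 ab_emb. Qed.

Lemma ler_ab_sum (I : finType) (F : I -> K) : ab (\sum_i F i) <= \sum_i ab (F i).
Proof.
elim/big_rec2: _ => [|i y1 y2 _ le_y12]; first by rewrite ab0.
by apply: le_trans (ler_abD _ _) _; rewrite lerD2l.
Qed.

Lemma ab_sign (k : nat) : ab ((-1) ^+ k) = 1.
Proof. by elim: k => [|k IHk]; rewrite ?expr0 // exprS abM IHk mulr1 abN. Qed.

Lemma vnorm_ge0 M (u : 'cV[K]_M) : 0 <= vnorm ab u.
Proof. exact: sqrtr_ge0. Qed.

Lemma sqr_vnorm M (u : 'cV[K]_M) : vnorm ab u ^+ 2 = \sum_i ab (u i 0) ^+ 2.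
Proof. by rewrite sqr_sqrtr //; apply: sumr_ge0 => i _; exact: sqr_ge0. Qed.

Lemma ab_dotpp M (u : 'cV[K]_M) : ab (dotp cj u u) = vnorm ab u ^+ 2.
Proof.
rewrite sqr_vnorm /dotp; under eq_bigr do rewrite mul_cj.
by rewrite -emb_sum ab_emb //; apply: sumr_ge0 => i _; exact: sqr_ge0.
Qed.

Lemma ab_dotpC M (u w : 'cV[K]_M) : ab (dotp cj u w) = ab (dotp cj w u).
Proof.
rewrite -abJ /dotp cj_sum; congr ab; apply: eq_bigr => i _.
by rewrite cjM cjK mulrC.
Qed.

Lemma dotp_suml M (I : finType) (c : I -> K) (y : I -> 'cV[K]_M) w :
  dotp cj (\sum_j c j *: y j) w = \sum_j c j * dotp cj (y j) w.
Proof.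
rewrite /dotp; under eq_bigr do rewrite summxE mulr_suml.
rewrite exchange_big /=; apply: eq_bigr => j _; rewrite mulr_sumr.
by apply: eq_bigr => i _; rewrite mxE mulrA.
Qed.

Lemma ab_dotp_le_vnorm M (u w : 'cV[K]_M) : ab (dotp cj u w) <= vnorm ab u * vnorm ab w.
Proof.
rewrite /dotp; apply: le_trans (ler_ab_sum _) _.
under eq_bigr do rewrite abM abJ.
exact: cauchy_schwarz.
Qed.

Lemma tight_frame_sum_sqr_vnorm M N (y : 'I_N -> 'cV[K]_M) B :
  tight_frame cj ab y B -> \sum_j vnorm ab (y j) ^+ 2 = B *+ M.
Proof.
case=> _ y_tight.
have row_sum i : \sum_j ab (y j i 0) ^+ 2 = B.
  have dotp_delta z : dotp cj (delta_mx i 0) z = cj (z i 0).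
    rewrite /dotp (bigD1 i) //= big1 ?addr0 => [|k /negbTE ki].
      by rewrite !mxE eqxx mul1r.
    by rewrite !mxE ki mul0r.
  have vnorm_delta : vnorm ab (delta_mx i 0 : 'cV[K]_M) = 1.
    rewrite /vnorm (bigD1 i) //= big1 ?addr0 => [|k /negbTE ki].
      by rewrite !mxE eqxx ab1 expr1n sqrtr1.
    by rewrite !mxE ki ab0 expr0n.
  have := y_tight (delta_mx i 0).
  by under eq_bigr do rewrite dotp_delta abJ; rewrite vnorm_delta expr1n mulr1.
under eq_bigr do rewrite sqr_vnorm.
by rewrite exchange_big /=; under eq_bigr do rewrite row_sum; rewrite sumr_const card_ord.
Qed.

Lemma tight_frame_sum_ab_dotp M N (x f : 'I_N -> 'cV[K]_M) B (u w : 'cV[K]_M) :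
  tight_frame cj ab x B -> tight_frame cj ab f B ->
  \sum_j ab (dotp cj u (f j)) * ab (dotp cj w (x j)) <= B * vnorm ab u * vnorm ab w.
Proof.
case=> B_gt0 x_tight [_ f_tight].
apply: le_trans (cauchy_schwarz _ _) _.
rewrite f_tight x_tight !(sqrtrM _ (ltW B_gt0)) !sqrtr_sqr !ger0_norm ?vnorm_ge0 //.
by rewrite mulrACA -expr2 sqr_sqrtr ?(ltW B_gt0) // mulrA.
Qed.

Lemma tight_frame_unimod_bound M N (x f : 'I_N -> 'cV[K]_M) B :
  tight_frame cj ab x B -> tight_frame cj ab f B -> unimod_bound cj ab x f B.
Proof.
move=> x_tight f_tight eps eps_unit v; set u := \sum_j _.
have le_u : vnorm ab u ^+ 2 <= B * vnorm ab v * vnorm ab u.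
  rewrite -ab_dotpp {2}/u dotp_suml.
  apply: le_trans (ler_ab_sum _) _.
  apply: le_trans (tight_frame_sum_ab_dotp _ _ x_tight f_tight).
  by apply: ler_sum => j _; rewrite !abM eps_unit mul1r (ab_dotpC (x j)).
have := vnorm_ge0 u; rewrite le0r => /orP[/eqP->|u_gt0].
  by rewrite mulr_ge0 ?vnorm_ge0 //; case: x_tight => /ltW.
by rewrite -(ler_pM2r u_gt0) -expr2.
Qed.

Lemma unimod_bound_sum_ab_dotp M N (x f : 'I_N -> 'cV[K]_M) C (u w : 'cV[K]_M) :
  unimod_bound cj ab x f C ->
  \sum_j ab (dotp cj u (f j)) * ab (dotp cj w (x j)) <= C * vnorm ab u * vnorm ab w.
Proof.
move=> hC.
(* the phases [e j] make every term of [<v, w>] a nonnegative real *)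
have [e e_unit e_phase] :=
  fin_all_exists2 (fun j => phase (dotp cj u (f j) * dotp cj (x j) w)).
set v := \sum_j (e j * dotp cj u (f j)) *: x j.
have ab_vw : ab (dotp cj v w) = \sum_j ab (dotp cj u (f j)) * ab (dotp cj w (x j)).
  rewrite dotp_suml; under eq_bigr => j _ do rewrite -mulrA e_phase.
  rewrite -emb_sum ab_emb; last by apply: sumr_ge0 => j _.
  by apply: eq_bigr => j _; rewrite abM (ab_dotpC (x j)).
rewrite -ab_vw; apply: le_trans (ab_dotp_le_vnorm _ _) _.
by apply: ler_wpM2r; [exact: vnorm_ge0 | exact: hC].
Qed.

Definition sign_vec M (d : {ffun 'I_M -> bool}) : 'cV[K]_M := \col_i (-1) ^+ d i.

Lemma vnorm_sign_vec M (d : {ffun 'I_M -> bool}) : vnorm ab (sign_vec d) = Num.sqrt M%:R.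
Proof.
rewrite /vnorm; under eq_bigr do rewrite mxE ab_sign expr1n.
by rewrite sumr_const card_ord.
Qed.

Lemma khintchine_sign_vec M K1 (y : 'cV[K]_M) : khintchine ab K1 ->
  2 ^+ M * K1 * vnorm ab y <= \sum_d ab (dotp cj (sign_vec d) y).
Proof.
move=> /(_ M (fun i => cj (y i 0))).
under eq_bigr do rewrite abJ.
rewrite ler_pdivlMl ?exprn_gt0 // -mulrA.
suff -> : \sum_d ab (dotp cj (sign_vec d) y) =
    \sum_(d : {ffun 'I_M -> bool}) ab (\sum_j (-1) ^+ d j * cj (y j 0)) by [].
by apply: eq_bigr => d _; congr ab; apply: eq_bigr => i _; rewrite mxE.
Qed.

Lemma khintchine_le1 K1 : khintchine ab K1 -> K1 <= 1.
Proof.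
move=> /(_ 1%N (fun _ => 1)); rewrite big_ord1 ab1 expr1n sqrtr1 mulr1.
under eq_bigr do rewrite big_ord1 mulr1 ab_sign.
by rewrite sum_ffun_bool_const mul1r mulVf // pnatr_eq0.
Qed.

Lemma khintchine_unimod_bound M N (x f : 'I_N -> 'cV[K]_M) C K1 :
  0 <= K1 -> khintchine ab K1 -> unimod_bound cj ab x f C ->
  K1 ^+ 2 * \sum_j vnorm ab (f j) * vnorm ab (x j) <= C * M%:R.
Proof.
move=> K1_ge0 hK hC.
pose S (y : 'cV[K]_M) := \sum_d ab (dotp cj (sign_vec d) y).
have lower : (2 ^+ M * K1) ^+ 2 * \sum_j vnorm ab (f j) * vnorm ab (x j)
    <= \sum_j S (f j) * S (x j).
  rewrite mulr_sumr; apply: ler_sum => j _; rewrite expr2 mulrACA.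
  by apply: ler_pM; rewrite ?khintchine_sign_vec ?mulr_ge0 ?vnorm_ge0 ?exprn_ge0.
have upper : \sum_j S (f j) * S (x j) <= (2 ^+ M) ^+ 2 * (C * M%:R).
  rewrite /S; under eq_bigr do rewrite -sum_mul_sum.
  rewrite exchange_big /=; under eq_bigr do rewrite exchange_big /=.
  have average d d' :
      \sum_j ab (dotp cj (sign_vec d) (f j)) * ab (dotp cj (sign_vec d') (x j)) <= C * M%:R.
    apply: le_trans (unimod_bound_sum_ab_dotp _ _ hC) _.
    by rewrite !vnorm_sign_vec -mulrA -expr2 sqr_sqrtr.
  have -> : (2 ^+ M) ^+ 2 * (C * M%:R) =
      \sum_(d : {ffun 'I_M -> bool}) \sum_(d' : {ffun 'I_M -> bool}) C * M%:R.
    by rewrite !sum_ffun_bool_const mulrC -mulrA -expr2.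
  by apply: ler_sum => d _; apply: ler_sum => d' _; exact: average.
rewrite -(ler_pM2l (exprn_gt0 2 (exprn_gt0 M (ltr0Sn R 1)))).
by apply: le_trans upper; rewrite mulrA -exprMn.
Qed.

Lemma least_unimod_const_dim_gt0 M N (x f : 'I_N -> 'cV[K]_M) C :
  least_unimod_const cj ab x f C -> (0 < M)%N.
Proof.
case=> C_gt0 [_ C_least]; case: (posnP M) => // M0; subst M.
suff : C <= C / 2 by lra.
apply: C_least; first by rewrite divr_gt0.
by move=> eps _ v; rewrite /vnorm !big_ord0 sqrtr0 mulr0.
Qed.

Lemma tight_frame_bounds M N (x f : 'I_N -> 'cV[K]_M) (Bx Bf C K1 : R) :
  0 < K1 -> khintchine ab K1 ->
  tight_frame cj ab x Bx -> tight_frame cj ab f Bf ->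
  (forall j, vnorm ab (x j) = vnorm ab (f j)) ->
  least_unimod_const cj ab x f C ->
  let B := (M%:R)^-1 * \sum_j vnorm ab (x j) ^+ 2 in
  [/\ Bx = B, Bf = B, C <= B & B <= 27 / 4 * K1 ^- 4 * C].
Proof.
move=> K1_gt0 hK x_tight f_tight eq_vnorm hC B.
have M_gt0 : (0 < M%:R :> R) by rewrite ltr0n (least_unimod_const_dim_gt0 hC).
have boundE B' : B' *+ M = \sum_j vnorm ab (x j) ^+ 2 -> B' = B.
  by rewrite /B => <-; rewrite -[B' *+ M]mulr_natl mulKf ?gt_eqF.
have Bx_eq : Bx = B by apply/boundE/esym/tight_frame_sum_sqr_vnorm.
have Bf_eq : Bf = B.
  apply/boundE; rewrite -(tight_frame_sum_sqr_vnorm f_tight).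
  by apply: eq_bigr => j _; rewrite eq_vnorm.
case: hC => C_gt0 [hC C_least].
have B_gt0 : 0 < B by rewrite -Bx_eq; case: x_tight.
have C_le_B : C <= B.
  by apply: C_least => //; apply: tight_frame_unimod_bound; [rewrite -Bx_eq | rewrite -Bf_eq].
have K1B_le_C : K1 ^+ 2 * B <= C.
  have := khintchine_unimod_bound (ltW K1_gt0) hK hC.
  rewrite (eq_bigr (fun j => vnorm ab (x j) ^+ 2)) => [|j _]; last by rewrite eq_vnorm expr2.
  by rewrite (tight_frame_sum_sqr_vnorm x_tight) Bx_eq -[B *+ M]mulr_natr mulrA ler_pM2r.
have K1_le1 := khintchine_le1 hK.
split => //; rewrite mulrAC ler_pdivlMr ?exprn_gt0 //.
have K1_4_le_2 : K1 ^+ 4 <= K1 ^+ 2.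
  rewrite -[4%N]/(2 + 2)%N exprD.
  by apply: ler_piMl; rewrite ?exprn_ge0 ?expr_le1 ?(ltW K1_gt0).
have := ler_wpM2r (ltW B_gt0) K1_4_le_2; lra.
Qed.

End ScalarField.

Lemma tight_frame_bounds_real (R : realType) (M N : nat) (x f : 'I_N -> 'cV[R]_M)
    (Bx Bf C K1 : R) :
  0 < K1 -> khintchine (@Num.norm _ R) K1 ->
  tight_frame id (@Num.norm _ R) x Bx -> tight_frame id (@Num.norm _ R) f Bf ->
  (forall j, vnorm (@Num.norm _ R) (x j) = vnorm (@Num.norm _ R) (f j)) ->
  least_unimod_const id (@Num.norm _ R) x f C ->
  let B := (M%:R)^-1 * \sum_j vnorm (@Num.norm _ R) (x j) ^+ 2 in
  [/\ Bx = B, Bf = B, C <= B & B <= 27 / 4 * K1 ^- 4 * C].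
Proof.
apply: (@tight_frame_bounds R R id (@Num.norm _ R) id) => //.
- exact: normrM.
- exact: ler_normD.
- exact: normr1.
- exact: normrN.
- exact: ger0_norm.
- by move=> a; rewrite real_normK ?num_real.
- move=> a; case: (ger0P a) => [a_ge0|a_lt0]; [exists 1 | exists (-1)];
    by rewrite ?normrN ?normr1 ?mul1r ?mulN1r ?ger0_norm ?ltr0_norm.
Qed.

Lemma tight_frame_bounds_complex (R : realType) (M N : nat) (x f : 'I_N -> 'cV[R[i]]_M)
    (Bx Bf C K1 : R) :
  0 < K1 -> khintchine (@Normc.normc R) K1 ->
  tight_frame (@conjc R) (@Normc.normc R) x Bx -> tight_frame (@conjc R) (@Normc.normc R) f Bf ->
  (forall j, vnorm (@Normc.normc R) (x j) = vnorm (@Normc.normc R) (f j)) ->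
  least_unimod_const (@conjc R) (@Normc.normc R) x f C ->
  let B := (M%:R)^-1 * \sum_j vnorm (@Normc.normc R) (x j) ^+ 2 in
  [/\ Bx = B, Bf = B, C <= B & B <= 27 / 4 * K1 ^- 4 * C].
Proof.
have normcE (z : R[i]) : `|z| = (Normc.normc z)%:C%C by case: z.
have normc_ge0 (z : R[i]) : 0 <= Normc.normc z by case: z => a b; exact: sqrtr_ge0.
have normc_conjc (z : R[i]) : Normc.normc (conjc z) = Normc.normc z.
  by case: z => a b /=; rewrite sqrrN.
have normc_real (r : R) : 0 <= r -> Normc.normc r%:C%C = r.
  by move=> r_ge0 /=; rewrite expr0n addr0 sqrtr_sqr ger0_norm.
have mul_conjc (z : R[i]) : z * conjc z = (Normc.normc z ^+ 2)%:C%C.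
  by rewrite -sqr_normc normcE rmorphXn.
have phase (z : R[i]) : exists2 e, Normc.normc e = 1 & e * z = (Normc.normc z)%:C%C.
  have [->|z_neq0] := eqVneq z 0.
    by exists 1; rewrite ?Normc.normc1 // mulr0 Normc.normc0.
  exists ((Normc.normc z)%:C%C / z); last by rewrite mulfVK.
  have normc_neq0 : Normc.normc z != 0 by apply: contra z_neq0 => /eqP/Normc.eq0_normc ->.
  by rewrite Normc.normcM Normc.normcV normc_real // mulfV.
exact: (@tight_frame_bounds R R[i] conjc (@Normc.normc R) (real_complex R) normc_ge0
  (@Normc.normcM R) (@le_normcD R) (@Normc.normc1 R) (@normcN R) normc_conjc
  (raddfD _) (rmorphM _) (@conjcK R) (raddfD _) normc_real mul_conjc phase).
Qed.

Theorem corollary1p4 :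
  (* real Hilbert spaces *)
  (forall (R : realType) (M N : nat) (x f : 'I_N -> 'cV[R]_M) (Bx Bf C K1 : R),
     0 < K1 -> khintchine (@Num.norm _ R) K1 ->
     tight_frame id (@Num.norm _ R) x Bx -> tight_frame id (@Num.norm _ R) f Bf ->
     (forall j, vnorm (@Num.norm _ R) (x j) = vnorm (@Num.norm _ R) (f j)) ->
     least_unimod_const id (@Num.norm _ R) x f C ->
     let B := (M%:R)^-1 * \sum_j vnorm (@Num.norm _ R) (x j) ^+ 2 in
     [/\ Bx = B, Bf = B, C <= B & B <= 27 / 4 * K1 ^- 4 * C])
  /\
  (* complex Hilbert spaces *)
  (forall (R : realType) (M N : nat) (x f : 'I_N -> 'cV[R[i]]_M) (Bx Bf C K1 : R),
     0 < K1 -> khintchine (@Normc.normc R) K1 ->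
     tight_frame (@conjc R) (@Normc.normc R) x Bx -> tight_frame (@conjc R) (@Normc.normc R) f Bf ->
     (forall j, vnorm (@Normc.normc R) (x j) = vnorm (@Normc.normc R) (f j)) ->
     least_unimod_const (@conjc R) (@Normc.normc R) x f C ->
     let B := (M%:R)^-1 * \sum_j vnorm (@Normc.normc R) (x j) ^+ 2 in
     [/\ Bx = B, Bf = B, C <= B & B <= 27 / 4 * K1 ^- 4 * C]).
Proof. by split; [exact: tight_frame_bounds_real | exact: tight_frame_bounds_complex]. Qed.
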